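(* If a $\sigma$-structure $\mathcal{A}$ has a $\mathfrak{g}$-guarded decomposition $\tau$, then (1) every maximal $\mathfrak{g}$-guarded subset of $A$ is $\lambda(p)$ for some $p \in P_{\tau}$; and (2) every clique in the Gaifman graph of $\mathcal{A}$ is $\mathfrak{g}$-guarded.
   Context: $\mathfrak{g}$ is atom, loose or clique guarding; $\mathfrak{g}$-guarded plays are non-empty lists of $\mathfrak{g}$-guarded sets, ordered by prefix $\sqsubseteq$, with $\lambda(p)$ the last element. For a focussed play $\langle p,a\rangle$ ($a\in\lambda(p)$), $[p,a]$ is its class under $\langle p,a\rangle\sim\langle q,a'\rangle$ iff $a=a'$, $p\sqcap q$ non-empty, and $a\in\lambda(u)$ for all $u$ on the prefix-order paths from $p\sqcap q$ to $p$ and $q$. A $\mathfrak{g}$-guarded decomposition of $\mathcal{A}$ is a map $\tau$ from $A$ to plays, with image $P_\tau$, that is reflexive ($a\in\lambda(\tau(a))$), edge covering (Gaifman-adjacent $a,b$ lie in some $\lambda(p)$, $p\in P_\tau$), minimal ($[\tau(a),a]=[q,a]$ implies $\tau(a)\sqsubseteq q$) and vertex connected (for $q$ below some element of $P_\tau$ with $a\in\lambda(q)$, $[\tau(a),a]=[q,a]$). *)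

From Stdlib Require Import List.
Import ListNotations.
Set Implicit Arguments.

Record signature := Signature { sym : Type; arity : sym -> nat }.

Record structure (sg : signature) := Structure {
  carrier : Type;
  interp : sym sg -> list carrier -> Prop;
  interp_arity : forall s t, interp s t -> length t = @arity sg s }.

Arguments carrier {sg} _.
Arguments interp {sg} _ _ _.

Definition subset {T} (X Y : T -> Prop) := forall x, X x -> Y x.

Definition finite_set {T} (X : T -> Prop) := exists l : list T, forall x, X x -> In x l.

Section Guarded.
Variables (sg : signature) (M : structure sg).
Notation A := (carrier M).

Definition gaifman_adj (a b : A) : Prop :=
  a <> b /\ exists s t, interp M s t /\ In a t /\ In b t.

Definition gaifman_clique (X : A -> Prop) : Prop :=
  finite_set X /\ forall a b, X a -> X b -> a <> b -> gaifman_adj a b.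

Inductive guarding := AtomGuarding | LooseGuarding | CliqueGuarding.

Definition atom_guarded (X : A -> Prop) : Prop :=
  (exists s t, interp M s t /\ forall x, X x -> In x t)
  \/ (exists a, forall x, X x -> x = a).

Definition loose_guarded (X : A -> Prop) : Prop :=
  exists Y, subset X Y /\ finite_set Y /\
    forall a b, Y a -> Y b -> a <> b ->
      exists s t, interp M s t /\ In a t /\ In b t /\ forall x, In x t -> Y x.

Definition clique_guarded (X : A -> Prop) : Prop := gaifman_clique X.

Definition guarded (g : guarding) (X : A -> Prop) : Prop :=
  match g with
  | AtomGuarding => atom_guarded X
  | LooseGuarding => loose_guarded X
  | CliqueGuarding => clique_guarded X
  end.

Definition is_play (g : guarding) (p : list (A -> Prop)) : Prop :=
  p <> [] /\ forall X, In X p -> guarded g X.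

Definition prefix (p q : list (A -> Prop)) : Prop := exists r, q = p ++ r.

Definition lam (p : list (A -> Prop)) : A -> Prop := last p (fun _ => False).

Definition is_meet (p q m : list (A -> Prop)) : Prop :=
  prefix m p /\ prefix m q /\ forall r, prefix r p -> prefix r q -> prefix r m.

Definition fsim (pa qb : list (A -> Prop) * A) : Prop :=
  let (p, a) := pa in let (q, a') := qb in
  a = a' /\ exists m, is_meet p q m /\ m <> [] /\
    (forall u, prefix m u -> prefix u p -> lam u a) /\
    (forall u, prefix m u -> prefix u q -> lam u a).

Definition focussed (g : guarding) (pa : list (A -> Prop) * A) : Prop :=
  is_play g (fst pa) /\ lam (fst pa) (snd pa).

Definition fclass (g : guarding) (p : list (A -> Prop)) (a : A)
  : list (A -> Prop) * A -> Prop :=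
  fun qb => focussed g qb /\ fsim (p, a) qb.

Definition guarded_decomposition (g : guarding) (tau : A -> list (A -> Prop)) : Prop :=
  (forall a, is_play g (tau a)) /\
  (forall a, lam (tau a) a) /\
  (forall a b, gaifman_adj a b -> exists c, lam (tau c) a /\ lam (tau c) b) /\
  (forall a q, is_play g q -> lam q a ->
     fclass g (tau a) a = fclass g q a -> prefix (tau a) q) /\
  (forall a q, is_play g q -> (exists b, prefix q (tau b)) -> lam q a ->
     fclass g (tau a) a = fclass g q a).

Definition maximal_guarded (g : guarding) (X : A -> Prop) : Prop :=
  guarded g X /\ forall Y, guarded g Y -> subset X Y -> subset Y X.

End Guarded.

(* Vertex connectivity and minimality force [tau x ⊑ tau c] whenever [x ∈ λ(tau c)], with
   [x] staying in every bag between the two.  Edge covering then makes [tau x] and [tau y]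
   prefixes of a common play for adjacent [x], [y], hence comparable, so on a finite clique
   the plays [tau x] form a chain with a largest element [tau a]; every clique member lies in
   [λ(tau a)].  Since guarded sets are cliques and guardedness passes to subsets, (2)
   follows, and a maximal guarded set equals the guarded bag [λ(tau a)] containing it. *)

From Stdlib Require Import List.
From Stdlib Require Import FunctionalExtensionality PropExtensionality Classical_Prop.
Import ListNotations.
Set Implicit Arguments.

Lemma last_In {T} (l : list T) (d : T) : l <> [] -> In (last l d) l.
Proof.
  induction l as [|x [|y l] IH]; intros Hl; [congruence | now left |].
  right. apply IH. discriminate.
Qed.

Lemma finite_chain_has_max {T} (R : T -> T -> Prop) (X : T -> Prop) (l : list T) :
  (forall x y z, R x y -> R y z -> R x z) ->
  (forall x y, X x -> X y -> R x y \/ R y x) ->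
  (forall x, In x l -> ~ X x) \/ (exists a, X a /\ forall x, In x l -> X x -> R x a).
Proof.
  intros Htrans Htot. induction l as [|y l IH].
  - left. intros x [].
  - destruct (classic (X y)) as [Hy|Hy].
    + right. destruct IH as [Hnone|[a [Ha Hmax]]].
      * exists y. split; [exact Hy|]. intros x [<-|Hx] HX.
        -- now destruct (Htot y y HX HX).
        -- now destruct (Hnone x Hx HX).
      * destruct (Htot y a Hy Ha) as [Hya|Hay].
        -- exists a. split; [exact Ha|]. intros x [<-|Hx] HX; auto.
        -- exists y. split; [exact Hy|]. intros x [<-|Hx] HX; eauto.
           now destruct (Htot y y HX HX).
    + destruct IH as [Hnone|[a [Ha Hmax]]].
      * left. intros x [<-|Hx]; auto.
      * right. exists a. split; [exact Ha|]. intros x [<-|Hx] HX; [contradiction | auto].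
Qed.

Section Structure.
Variables (sg : signature) (M : structure sg).
Local Notation A := (carrier M).
Local Notation pre := (prefix M).

Lemma prefix_refl (p : list (A -> Prop)) : pre p p.
Proof. exists []. now rewrite app_nil_r. Qed.

Lemma prefix_trans (p q r : list (A -> Prop)) : pre p q -> pre q r -> pre p r.
Proof. intros [s ->] [t ->]. exists (s ++ t). now rewrite app_assoc. Qed.

Lemma prefix_antisym (p q : list (A -> Prop)) : pre p q -> pre q p -> p = q.
Proof.
  intros [s ->] [t Ht]. rewrite <- app_assoc, <- (app_nil_r p) in Ht at 1.
  apply app_inv_head, eq_sym, app_eq_nil in Ht as [-> _]. now rewrite app_nil_r.
Qed.

Lemma prefix_comparable (p q r : list (A -> Prop)) :
  pre p r -> pre q r -> pre p q \/ pre q p.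
Proof.
  intros [s ->] [t Ht]. destruct (app_eq_app _ _ _ _ Ht) as [l [[-> _]|[-> _]]].
  - right. now exists l.
  - left. now exists l.
Qed.

Lemma fclass_refl (g : guarding) (p : list (A -> Prop)) (a : A) :
  focussed M g (p, a) -> fclass M g p a (p, a).
Proof.
  intros Hfoc. split; [exact Hfoc|]. split; [reflexivity|]. exists p.
  split; [split; [apply prefix_refl | split; [apply prefix_refl | auto]]|].
  split; [exact (proj1 (proj1 Hfoc))|].
  split; intros u Hpu Hup; rewrite <- (prefix_antisym Hpu Hup); exact (proj2 Hfoc).
Qed.

Lemma guarded_clique (g : guarding) (X : A -> Prop) : guarded M g X -> gaifman_clique M X.
Proof.
  destruct g; simpl.
  - intros [[s [t [Hst Hsub]]]|[a Ha]].
    + split; [now exists t|]. intros x y Hx Hy Hxy. split; [exact Hxy|]. exists s, t; auto.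
    + split; [exists [a]; intros x Hx; left; now rewrite (Ha x Hx)|].
      intros x y Hx Hy Hxy. exfalso. apply Hxy. now rewrite (Ha x Hx), (Ha y Hy).
  - intros [Y [HXY [HY Hcov]]]. split; [now destruct HY as [l Hl]; exists l; auto|].
    intros x y Hx Hy Hxy. split; [exact Hxy|].
    destruct (Hcov x y (HXY x Hx) (HXY y Hy) Hxy) as [s [t [Hst [Hxt [Hyt _]]]]].
    now exists s, t.
  - tauto.
Qed.

Lemma guarded_subset (g : guarding) (X Y : A -> Prop) :
  subset X Y -> guarded M g Y -> guarded M g X.
Proof.
  intros HXY. destruct g; simpl.
  - intros [[s [t [Hst Hsub]]]|[a Ha]]; [left; exists s, t | right; exists a]; auto.
  - intros [Z [HYZ HZ]]. exists Z. split; [intros x Hx; auto | exact HZ].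
  - intros [[l Hl] Hadj]. split; [exists l|]; auto.
Qed.

Section Decomposition.
Variables (g : guarding) (tau : A -> list (A -> Prop)).
Hypothesis hdec : guarded_decomposition M g tau.

Lemma lam_tau_guarded (b : A) : guarded M g (lam M (tau b)).
Proof.
  destruct hdec as [Hplay _]. destruct (Hplay b) as [Hne Hguarded].
  apply Hguarded, last_In, Hne.
Qed.

Lemma fclass_tau_of_lam (x c : A) :
  lam M (tau c) x -> fclass M g (tau x) x = fclass M g (tau c) x.
Proof.
  intros Hx. destruct hdec as (Hplay & _ & _ & _ & Hconn).
  apply Hconn; [apply Hplay | exists c; apply prefix_refl | exact Hx].
Qed.

Lemma tau_prefix_of_lam (x c : A) : lam M (tau c) x -> pre (tau x) (tau c).
Proof.
  intros Hx. destruct hdec as (Hplay & _ & _ & Hmin & _).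
  apply Hmin; [apply Hplay | exact Hx | now apply fclass_tau_of_lam].
Qed.

Lemma lam_of_between (x c : A) (u : list (A -> Prop)) :
  lam M (tau c) x -> pre (tau x) u -> pre u (tau c) -> lam M u x.
Proof.
  intros Hx Hxu Huc.
  assert (Hclass : fclass M g (tau x) x (tau c, x)).
  { rewrite (fclass_tau_of_lam _ _ Hx). apply fclass_refl. split; [apply hdec | exact Hx]. }
  destruct Hclass as [_ [_ [m [[Hmx _] [_ [_ Hbetween]]]]]].
  apply Hbetween; [apply prefix_trans with (tau x) | ]; assumption.
Qed.

Lemma tau_comparable_of_adj (x y : A) :
  gaifman_adj M x y -> pre (tau x) (tau y) \/ pre (tau y) (tau x).
Proof.
  intros Hxy. destruct hdec as (_ & _ & Hcover & _).
  destruct (Hcover x y Hxy) as [c [Hx Hy]].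
  apply prefix_comparable with (tau c); now apply tau_prefix_of_lam.
Qed.

(* Edge covering puts [x] and [a] in a common bag [λ(tau c)]; as [tau x ⊑ tau a ⊑ tau c],
   [x] survives down to [λ(tau a)]. *)
Lemma lam_tau_of_adj (x a : A) :
  gaifman_adj M x a -> pre (tau x) (tau a) -> lam M (tau a) x.
Proof.
  intros Hxa Hpre. destruct hdec as (_ & _ & Hcover & _).
  destruct (Hcover x a Hxa) as [c [Hx Ha]].
  apply lam_of_between with c; [exact Hx | exact Hpre | now apply tau_prefix_of_lam].
Qed.

Lemma clique_subset_lam_tau (X : A -> Prop) :
  inhabited A -> gaifman_clique M X -> exists b, subset X (lam M (tau b)).
Proof.
  intros [b0] [[l Hl] Hadj].
  destruct (finite_chain_has_max (fun x y => pre (tau x) (tau y)) X l)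
    as [Hempty|[a [Ha Hmax]]].
  - intros x y z. apply prefix_trans.
  - intros x y Hx Hy. destruct (classic (x = y)) as [<-|Hxy].
    + left. apply prefix_refl.
    + now apply tau_comparable_of_adj, Hadj.
  - exists b0. intros x Hx. now destruct (Hempty x (Hl x Hx) Hx).
  - exists a. intros x Hx. destruct (classic (x = a)) as [->|Hxa].
    + apply hdec.
    + apply lam_tau_of_adj; auto.
Qed.

End Decomposition.
End Structure.

Theorem proposition4p4 (sg : signature) (M : structure sg)
  (g : guarding) (tau : carrier M -> list (carrier M -> Prop))
  (hne : inhabited (carrier M))
  (hdec : guarded_decomposition M g tau) :
  (forall X, maximal_guarded M g X -> exists b, X = lam M (tau b)) /\
  (forall X, gaifman_clique M X -> guarded M g X).
Proof.
  split.
  - intros X [HX Hmax].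
    destruct (clique_subset_lam_tau hdec hne (guarded_clique M g X HX)) as [b Hsub].
    exists b. apply functional_extensionality. intros x.
    apply propositional_extensionality. split; [apply Hsub|].
    exact (Hmax _ (lam_tau_guarded hdec b) Hsub x).
  - intros X HX.
    destruct (clique_subset_lam_tau hdec hne HX) as [b Hsub].
    exact (guarded_subset M g Hsub (lam_tau_guarded hdec b)).
Qed.
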